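(* Every tree in $\mathcal{O}'$ belongs to $\mathcal{O}$, and $\mathcal{O}'\neq\mathcal{O}$; in fact the path $P_{10}$ belongs to $\mathcal{O}$ but not to $\mathcal{O}'$.
   Context: Family $\mathcal{O}$ (labeled trees, each vertex has status $A$ or $B$): it contains the path $P_6$ whose two central vertices have status $A$ and other four vertices status $B$; and it is closed under: Operation $\mathcal{O}_1$: for a path $xyz$ with $x,y$ of status $B$ and $z$ of status $A$, add a new path $abc$ and edge $za$ with statuses $a\colon A$, $b\colon B$, $c\colon B$; Operation $\mathcal{O}_2$: for an edge $xy$ with $x,y$ of status $B$, add a new path $abcd$ and edge $dx$ with statuses $a\colon B$, $b\colon B$, $c\colon A$, $d\colon A$. An unlabeled tree is in $\mathcal{O}$ if it is the underlying tree of a labeled tree in $\mathcal{O}$. $2$-subdivision: let $G$ be a connected graph of order at least $2$ and $\mathcal{P}=\{\mathcal{P}(v):v\in V(G)\}$ where $\mathcal{P}(v)$ is a partition of $N_G(v)$ (into nonempty blocks). $G(\mathcal{P})$ has vertex set $V(G)\cup(V(G)\times\{1\})\cup\bigcup_{v\in V(G)}(\{v\}\times\mathcal{P}(v))$ and edge set $E_1\cup E_2\cup E_3$, where $E_1=\{v(v,1):v\in V(G)\}$, $E_2=\{v(v,A): v\in V(G), A\in\mathcal{P}(v)\}$, and $E_3=\{(u,A)(v,B): uv\in E(G), A\in\mathcal{P}(u), B\in\mathcal{P}(v), v\in A, u\in B\}$. (Intuitively: subdivide each inner edge of the corona $G\circ K_1$ twice, then for each $v$ and each block $A\in\mathcal{P}(v)$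 merge the new vertices adjacent to $v$ on the edges $vw$, $w\in A$, into one vertex.) $\mathcal{O}'$ is the family of all trees $T(\mathcal{P})$ where $T$ is a tree of order at least $2$ and $\mathcal{P}$ is such a family of partitions. *)

From HB Require Import structures.
From mathcomp Require Import all_boot.
Set Implicit Arguments. Unset Strict Implicit. Unset Printing Implicit Defensive.

Definition acyclic (T : finType) (e : rel T) : Prop :=
  forall c : seq T, uniq c -> 3 <= size c -> ~~ cycle e c.

Definition is_tree (T : finType) (e : rel T) : Prop :=
  symmetric e /\ irreflexive e /\ (forall x y : T, connect e x y) /\ acyclic e.

Definition graph_iso (T1 T2 : finType) (e1 : rel T1) (e2 : rel T2) : Prop :=
  exists f : T1 -> T2, bijective f /\ forall x y, e2 (f x) (f y) = e1 x y.

Definition path_adj (n : nat) : rel 'I_n :=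
  fun i j => (i.+1 == j :> nat) || (j.+1 == i :> nat).

(** * Labeled trees and the family O.  Status A is [true], status B is [false]. *)
Record lgraph := LGraph { lv : finType; ladj : rel lv; lstat : lv -> bool }.

Definition P6L : lgraph :=
  @LGraph 'I_6 (@path_adj 6) (fun i => (i == 2 :> nat) || (i == 3 :> nat)).

(** Operation O1 at z: new vertices inr 0 = a, inr 1 = b, inr 2 = c;
    path abc and edge za; statuses a:A, b:B, c:B. *)
Definition op1_adj (G : lgraph) (z : lv G) : rel (lv G + 'I_3)%type :=
  fun p q => match p, q with
  | inl u, inl v => @ladj G u v
  | inl u, inr j => (u == z) && (j == 0 :> nat)
  | inr j, inl u => (u == z) && (j == 0 :> nat)
  | inr i, inr j => @path_adj 3 i j
  end.
Definition op1_stat (G : lgraph) : (lv G + 'I_3)%type -> bool :=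
  fun p => match p with inl u => @lstat G u | inr j => (j == 0 :> nat) end.
Definition op1 (G : lgraph) (z : lv G) : lgraph :=
  @LGraph (lv G + 'I_3)%type (@op1_adj G z) (@op1_stat G).

(** Operation O2 at x: new vertices inr 0 = a, inr 1 = b, inr 2 = c,
    inr 3 = d; path abcd and edge dx; statuses a:B, b:B, c:A, d:A. *)
Definition op2_adj (G : lgraph) (x : lv G) : rel (lv G + 'I_4)%type :=
  fun p q => match p, q with
  | inl u, inl v => @ladj G u v
  | inl u, inr j => (u == x) && (j == 3 :> nat)
  | inr j, inl u => (u == x) && (j == 3 :> nat)
  | inr i, inr j => @path_adj 4 i j
  end.
Definition op2_stat (G : lgraph) : (lv G + 'I_4)%type -> bool :=
  fun p => match p with inl u => @lstat G u | inr j => (2 <= j) end.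
Definition op2 (G : lgraph) (x : lv G) : lgraph :=
  @LGraph (lv G + 'I_4)%type (@op2_adj G x) (@op2_stat G).

Inductive inO : lgraph -> Prop :=
| inO_P6 : inO P6L
| inO_op1 (G : lgraph) (x y z : lv G) :
    inO G -> @ladj G x y -> @ladj G y z ->
    ~~ @lstat G x -> ~~ @lstat G y -> @lstat G z -> inO (@op1 G z)
| inO_op2 (G : lgraph) (x y : lv G) :
    inO G -> @ladj G x y -> ~~ @lstat G x -> ~~ @lstat G y -> inO (@op2 G x).

Definition in_O (T : finType) (e : rel T) : Prop :=
  exists G : lgraph, inO G /\ graph_iso (@ladj G) e.

Definition nbhd (V : finType) (e : rel V) (v : V) : {set V} := [set w | e v w].

(** Vertices of G(P): inl (inl v) = v, inl (inr v) = (v,1),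
    inr ((v,A)) = (v,A) with A a block of P v. *)
Definition sub2_vert (V : finType) (P : V -> {set {set V}}) : finType :=
  ((V + V) + {p : V * {set V} | p.2 \in P p.1})%type.

Definition sub2_adj (V : finType) (e : rel V) (P : V -> {set {set V}}) :
  rel (sub2_vert P) :=
  fun p q => match p, q with
  | inl (inl v), inl (inr w) => v == w
  | inl (inr w), inl (inl v) => v == w
  | inl (inl v), inr b => v == (val b).1
  | inr b, inl (inl v) => v == (val b).1
  | inr a, inr b =>
      e (val a).1 (val b).1 && ((val b).1 \in (val a).2)
                            && ((val a).1 \in (val b).2)
  | _, _ => false
  end.

Definition in_O' (H : finType) (eH : rel H) : Prop :=
  exists (V : finType) (e : rel V) (P : V -> {set {set V}}),
    [/\ is_tree e, 2 <= #|V|,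
        (forall v, partition (P v) (nbhd e v)) &
        graph_iso (@sub2_adj V e P) eH].

From mathcomp Require Import all_boot zify.
From Stdlib Require Import Lia.
Set Implicit Arguments. Unset Strict Implicit. Unset Printing Implicit Defensive.

(* Give the vertices of a 2-subdivision T(P) status A when they are blocks
   (v,A) and status B otherwise.  If w is a leaf of T with neighbour v,
   deleting w from T and from the blocks of P(v) yields a 2-subdivision of a
   smaller tree, and T(P) is recovered from it by one operation: O2 at v when
   {w} is a block of P(v) (the new path being (w,1) w (w,{v}) (v,{w})), and O1
   at the block (v,A) containing w otherwise (new path (w,{v}) w (w,1)).
   Induction down to the tree of order 2, whose 2-subdivision is the labeled
   P6, gives O' within O.  The path P10 is O2 applied to P6; but every (v,1)
   is a leaf of T(P) and P10 has only two leaves, so T has order 2 and T(P)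
   has at most 6 vertices. *)

Lemma inj_surj_bij (T1 T2 : finType) (f : T1 -> T2) :
  injective f -> (forall y, exists x, f x = y) -> bijective f.
Proof.
move=> f_inj f_surj; apply: inj_card_bij => //.
rewrite -[#|T1|]cardsT -(card_imset _ f_inj) -cardsT; apply: subset_leq_card.
by apply/subsetP => y _; have [x <-] := f_surj y; exact: imset_f.
Qed.

Lemma partition_set1 (T : finType) (Q : {set {set T}}) (a : T) :
  partition Q [set a] -> Q = [set [set a]].
Proof.
move=> Qa; have /and3P [/eqP covQ _ Q0] := Qa.
have QE B : B \in Q -> B = [set a].
  move=> QB; have := partitionS Qa QB; rewrite subset1 => /orP [/eqP //|/eqP B0].
  by move: Q0; rewrite -B0 QB.
apply/setP => B; rewrite in_set1; apply/idP/eqP => [/QE //|->].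
have : a \in cover Q by rewrite covQ set11.
by case/bigcupP => C QC _; rewrite -(QE C QC).
Qed.

Lemma card_partition_le (T : finType) (Q : {set {set T}}) (D : {set T}) :
  partition Q D -> #|Q| <= #|D|.
Proof.
move=> QD; rewrite (card_partition QD) -sum1_card; apply: leq_sum => A QA.
by rewrite card_gt0; apply: contraTneq QA => ->; case/and3P: QD.
Qed.

Lemma partition_leaf (T : finType) (e : rel T) (Q : {set {set T}}) (w v : T) :
  partition Q (nbhd e w) -> (forall y, e w y = (y == v)) -> Q = [set [set v]].
Proof.
move=> Qw w_leaf; apply: partition_set1.
by have -> : [set v] = nbhd e w by apply/setP => y; rewrite !inE w_leaf.
Qed.

(** * Leaves of trees *)

Section AcyclicLeaf.
Variables (V : finType) (e : rel V).
Hypotheses (e_sym : symmetric e) (e_irr : irreflexive e) (e_acyc : acyclic e).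

(* A neighbour y of x further along the path x z ... y ... would close the
   cycle x z ... y. *)
Lemma path_head_leaf x z s :
  uniq [:: x, z & s] -> path e x (z :: s) -> (forall y, e x y -> y \in [:: x, z & s]) ->
  forall y, e x y = (y == z).
Proof.
move=> xs_uniq xs_path x_closed y; apply/idP/eqP => [xy|->]; last by case/andP: xs_path.
move: (x_closed y xy); rewrite !in_cons => /or3P [/eqP yx|/eqP //|ys].
  by move: xy; rewrite yx e_irr.
case/splitPr: ys xs_uniq xs_path => s1 s2 xs_uniq xs_path; exfalso.
have c_uniq : uniq [:: x, z & rcons s1 y].
  apply: subseq_uniq xs_uniq; rewrite /= !eqxx -cats1.
  by apply: cat_subseq; rewrite ?subseq_refl //= eqxx sub0seq.
have := e_acyc c_uniq; rewrite /= size_rcons => /(_ isT); apply/negP/negPn.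
move: xs_path; rewrite /= cat_path /= => /and3P [xz s1_path /andP [s1y _]].
by rewrite xz !rcons_path s1_path s1y last_rcons e_sym.
Qed.

Lemma acyclic_leaf x s :
  uniq (x :: s) -> path e x s -> s != [::] -> exists w v, forall y, e w y = (y == v).
Proof.
(* Extend the path at its head; induction on the vertices not yet on it. *)
move: {2}(#|V| - size s) (leqnn (#|V| - size s)) => n.
elim: n x s => [|n IH] x s s_bound xs_uniq xs_path s0.
  move: s_bound; rewrite leqn0 subn_eq0 => V_le.
  by have := max_card (mem (x :: s)); rewrite (card_uniqP xs_uniq) /= ltnNge V_le.
have [y /andP [xy y_new]|x_closed] := pickP [pred y | e x y && (y \notin x :: s)].
  apply: (IH y (x :: s)) => //=; first by rewrite subnS -subn1 leq_subLR add1n.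
    by rewrite y_new.
  by rewrite e_sym xy.
case: s s0 xs_uniq xs_path x_closed {s_bound} => [//|z s] _ xs_uniq xs_path x_closed.
exists x, z; apply: (path_head_leaf xs_uniq xs_path) => y xy.
by move: (x_closed y) => /=; rewrite xy => /negbFE.
Qed.

End AcyclicLeaf.

Lemma tree_leaf (V : finType) (e : rel V) :
  is_tree e -> 1 < #|V| -> exists w v, forall y, e w y = (y == v).
Proof.
move=> [e_sym [e_irr [e_conn e_acyc]]] /card_gt1P [x [y [_ _ x_y]]].
case/connectP: (e_conn x y) => [[|z p]] /=; first by move=> _ yx; rewrite yx eqxx in x_y.
case/andP => xz _ _; apply: (acyclic_leaf e_sym e_irr e_acyc (x := x) (s := [:: z])) => //=.
  by rewrite inE andbT; apply: contraTneq xz => ->; rewrite e_irr.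
by rewrite xz.
Qed.

Lemma tree_order2 (V : finType) (e : rel V) : #|V| = 2 -> is_tree e ->
  exists u v, [/\ u != v, forall x, (x == u) || (x == v) & forall y, e u y = (y == v)].
Proof.
move=> V2 [_ [e_irr [e_conn _]]].
have /card_gt1P [u [v [_ _ u_v]]] : 1 < #|V| by rewrite V2.
have uv_all x : (x == u) || (x == v).
  have : x \in [set u; v]; last by rewrite !inE.
  rewrite (_ : [set u; v] = setT) ?inE //.
  by apply/eqP; rewrite eqEcard subsetT cardsT cards2 u_v V2.
have e_uv : e u v.
  case/connectP: (e_conn u v) => [[|z p]] /=; first by move=> _ vu; rewrite vu eqxx in u_v.
  case/andP => uz _ _; have [/eqP zu|/eqP <- //] := orP (uv_all z).
  by move: uz; rewrite zu e_irr.
exists u, v; split => // y; have [/eqP ->|/eqP ->] := orP (uv_all y).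
  by rewrite e_irr (negbTE u_v).
by rewrite e_uv eqxx.
Qed.

(** * Labeled isomorphisms *)

Definition liso_map (G H : lgraph) (f : lv G -> lv H) : Prop :=
  [/\ bijective f, forall x y, ladj (f x) (f y) = ladj x y
    & forall x, lstat (f x) = lstat x].

Definition liso (G H : lgraph) : Prop := exists f, @liso_map G H f.

Lemma liso_trans G H K : liso G H -> liso H K -> liso G K.
Proof.
move=> [f [f_bij f_adj f_stat]] [g [g_bij g_adj g_stat]].
exists (g \o f); split => [|x y|x] /=; first exact: bij_comp.
  by rewrite g_adj f_adj.
by rewrite g_stat f_stat.
Qed.

Definition sum_lmap (A B C : Type) (f : A -> B) (p : A + C) : B + C :=
  match p with inl a => inl (f a) | inr c => inr c end.

Lemma sum_lmap_bij (A B C : Type) (f : A -> B) :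
  bijective f -> bijective (@sum_lmap A B C f).
Proof. by move=> [g fK gK]; exists (sum_lmap g) => [[a|c]|[b|c]] /=; rewrite ?fK ?gK. Qed.

Definition sum_case (A B C : Type) (f : A -> C) (g : B -> C) (s : A + B) : C :=
  match s with inl a => f a | inr b => g b end.

Lemma sum_case_inj (A B : Type) (C : eqType) (f : A -> C) (g : B -> C) :
  injective f -> injective g -> (forall a b, f a != g b) -> injective (sum_case f g).
Proof.
move=> f_inj g_inj fg [a|b] [a'|b'] /=.
- by move/f_inj ->.
- by move=> fg'; have := fg a b'; rewrite fg' eqxx.
- by move=> gf; have := fg a' b; rewrite gf eqxx.
- by move/g_inj ->.
Qed.

Section LisoOps.
Variables (G H : lgraph) (f : lv G -> lv H).
Hypothesis f_liso : liso_map f.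

Lemma liso_op1 z : liso (op1 z) (op1 (f z)).
Proof.
have [f_bij f_adj f_stat] := f_liso; have f_inj := bij_inj f_bij.
exists (sum_lmap f); split; first exact: sum_lmap_bij.
  by move=> [a|c] [b|d] //=; rewrite ?f_adj ?(inj_eq f_inj).
by case=> [a|c] /=.
Qed.

Lemma liso_op2 x : liso (op2 x) (op2 (f x)).
Proof.
have [f_bij f_adj f_stat] := f_liso; have f_inj := bij_inj f_bij.
exists (sum_lmap f); split; first exact: sum_lmap_bij.
  by move=> [a|c] [b|d] //=; rewrite ?f_adj ?(inj_eq f_inj).
by case=> [a|c] /=.
Qed.

End LisoOps.

Definition sub2_stat (V : finType) (P : V -> {set {set V}}) (p : sub2_vert P) : bool :=
  if p is inr _ then true else false.

Definition sub2_lgraph (V : finType) (e : rel V) (P : V -> {set {set V}}) : lgraph :=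
  @LGraph (sub2_vert P) (@sub2_adj V e P) (@sub2_stat V P).

Lemma sub2_adj_sym (V : finType) (e : rel V) (P : V -> {set {set V}}) :
  symmetric e -> symmetric (@sub2_adj V e P).
Proof.
move=> e_sym [[x|x]|a] [[y|y]|b] //=; rewrite ?(eq_sym x) //.
by rewrite e_sym -!andbA; congr andb; rewrite andbC.
Qed.

Definition inO_iso (G : lgraph) : Prop := exists2 G0, inO G0 & liso G0 G.

Lemma inO_iso_liso G H : inO_iso G -> liso G H -> inO_iso H.
Proof. by move=> [G0 G0_O G0G] GH; exists G0 => //; exact: liso_trans GH. Qed.

Lemma inO_iso_op1 (G : lgraph) (x y z : lv G) :
  inO_iso G -> ladj x y -> ladj y z -> ~~ lstat x -> ~~ lstat y -> lstat z ->
  inO_iso (op1 z).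
Proof.
move=> [G0 G0_O [f [[g fK gK] f_adj f_stat]]] xy yz x_B y_B z_A.
exists (op1 (g z)); last by rewrite -{2}(gK z); apply: liso_op1; split => //; exists g.
apply: (inO_op1 (x := g x) (y := g y)) => //; rewrite -?f_adj -?f_stat ?gK //.
Qed.

Lemma inO_iso_op2 (G : lgraph) (x y : lv G) :
  inO_iso G -> ladj x y -> ~~ lstat x -> ~~ lstat y -> inO_iso (op2 x).
Proof.
move=> [G0 G0_O [f [[g fK gK] f_adj f_stat]]] xy x_B y_B.
exists (op2 (g x)); last by rewrite -{2}(gK x); apply: liso_op2; split => //; exists g.
apply: (inO_op2 (y := g y)) => //; rewrite -?f_adj -?f_stat ?gK //.
Qed.

(** * Removing a leaf *)

Section LeafDeletion.
Variables (V : finType) (e : rel V) (P : V -> {set {set V}}) (w v : V).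
Hypotheses (e_sym : symmetric e) (e_irr : irreflexive e)
  (P_part : forall x, partition (P x) (nbhd e x))
  (w_leaf : forall y, e w y = (y == v)).

Local Notation V' := {x : V | x != w}.

Definition e_del : rel V' := fun x y => e (val x) (val y).
Definition restr (A : {set V}) : {set V'} := [set y : V' | val y \in A].
Definition P_del (x : V') : {set {set V'}} :=
  [set restr A | A in P (val x) & A != [set w]].

Lemma e_wv : e w v. Proof. by rewrite w_leaf. Qed.
Lemma e_vw : e v w. Proof. by rewrite e_sym e_wv. Qed.

Lemma v_neq_w : v != w.
Proof. by apply: contraTneq e_wv => ->; rewrite e_irr. Qed.

Lemma v_eq_wF : (v == w) = false. Proof. exact/negbTE/v_neq_w. Qed.
Lemma w_eq_vF : (w == v) = false. Proof. by rewrite eq_sym v_eq_wF. Qed.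

Lemma P_leaf : P w = [set [set v]].
Proof. exact: partition_leaf (P_part w) w_leaf. Qed.

Lemma P_triv x : trivIset (P x).
Proof. by case/and3P: (P_part x). Qed.

Lemma block_adj x A a : A \in P x -> a \in A -> e x a.
Proof. by move=> PA /(subsetP (partitionS (P_part x) PA)); rewrite inE. Qed.

Lemma block_not_w x A : A \in P x -> A != [set w] -> exists2 a, a \in A & a != w.
Proof.
move=> PA A_w; suff /set0Pn [a] : A :\ w != set0 by rewrite !inE => /andP [aw aA]; exists a.
apply: contra A_w; rewrite setD_eq0 subset1 => /orP [//|/eqP A0].
by case/and3P: (P_part x) => _ _; rewrite -A0 PA.
Qed.

Lemma P_delP x A' :
  reflect (exists2 A, A \in P (val x) & A != [set w] /\ A' = restr A) (A' \in P_del x).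
Proof.
apply: (iffP imsetP) => [[A] | [A PA [A_w ->]]].
  by rewrite inE => /andP [PA A_w] ->; exists A.
by exists A => //; rewrite inE PA A_w.
Qed.

(* The block of P x containing some element of A'; the default x is never used
   for the nonempty blocks A' of P_del x. *)
Definition unrestr (x : V') (A' : {set V'}) : {set V} :=
  pblock (P (val x)) (val (odflt x [pick y in A'])).

Lemma restrK x A : A \in P (val x) -> A != [set w] -> unrestr x (restr A) = A.
Proof.
move=> PA A_w; rewrite /unrestr; case: pickP => [y|] /=.
  by rewrite inE => yA; apply: def_pblock (P_triv _) PA yA.
have [a aA a_w] := block_not_w PA A_w.
by move=> /(_ (Sub a a_w)); rewrite inE /= aA.
Qed.

Section Unrestr.
Variables (x : V') (A' : {set V'}).
Hypothesis A'_P : A' \in P_del x.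

Lemma unrestr_mem : unrestr x A' \in P (val x).
Proof. by case/P_delP: A'_P => A PA [A_w ->]; rewrite restrK. Qed.

Lemma unrestrK : restr (unrestr x A') = A'.
Proof. by case/P_delP: A'_P => A PA [A_w ->]; rewrite restrK. Qed.

Lemma unrestr_neq : unrestr x A' != [set w].
Proof. by case/P_delP: A'_P => A PA [A_w ->]; rewrite restrK. Qed.

Lemma mem_unrestr (y : V') : (val y \in unrestr x A') = (y \in A').
Proof. by rewrite -{2}unrestrK inE. Qed.

End Unrestr.

Lemma P_del_partition x : partition (P_del x) (nbhd e_del x).
Proof.
apply/and3P; split.
- apply/eqP/setP => y; rewrite inE /e_del.
  apply/bigcupP/idP => [[A' /P_delP [A PA [_ ->]]]|xy].
    by rewrite inE; apply: block_adj PA.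
  have : val y \in cover (P (val x)).
    by case/and3P: (P_part (val x)) => /eqP -> _ _; rewrite inE.
  case/bigcupP => A PA yA; exists (restr A); last by rewrite inE.
  apply/P_delP; exists A => //; split => //.
  by apply: contraTneq yA => ->; rewrite inE (valP y).
- apply/trivIsetP => _ _ /P_delP [A PA [_ ->]] /P_delP [B PB [_ ->]] AB.
  have /(trivIsetP (P_triv (val x)) _ _ PA PB) : A != B by apply: contraNneq AB => ->.
  rewrite !disjoint_subset => /subsetP AB'; apply/subsetP => y; rewrite !inE.
  by move=> /AB'; rewrite inE.
- apply/negP => /P_delP [A PA [A_w A0]].
  have [a aA a_w] := block_not_w PA A_w.
  have : (Sub a a_w : V') \in restr A by rewrite inE.
  by rewrite -A0 inE.
Qed.

Let vD : V' := Sub v v_neq_w.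

(* The vertices of T whose copy in T - w reaches v (w vacuously) form an
   e-closed set containing v. *)
Lemma e_del_connect_v : (forall x y, connect e x y) -> forall x : V', connect e_del x vD.
Proof.
move=> e_conn.
pose C := [pred x : V | [forall x' : V', (val x' == x) ==> connect e_del x' vD]].
have C_closed : closed e C.
  apply: intro_closed; first exact: sym_connect_sym.
  move=> x y xy /forallP Cx; apply/forallP => y'; apply/implyP => /eqP y'E.
  have [xw|x_w] := eqVneq x w.
    have -> : y' = vD by apply: val_inj; apply/eqP; rewrite /= y'E -w_leaf -xw.
    exact: connect0.
  have := Cx (Sub x x_w); rewrite eqxx /=; apply: connect_trans.
  by apply: connect1; rewrite /e_del y'E e_sym.
have Cv : v \in C.
  apply/forallP => x'; apply/implyP => /eqP x'E.
  by rewrite (_ : x' = vD) //; apply: val_inj.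
move=> x; have := closed_connect C_closed (e_conn v (val x)).
by rewrite Cv => /esym /forallP /(_ x); rewrite eqxx.
Qed.

Lemma e_del_tree : is_tree e -> is_tree e_del.
Proof.
move=> [_ [_ [e_conn e_acyc]]]; split; [|split; [|split]].
- by move=> x y; rewrite /e_del e_sym.
- by move=> x; rewrite /e_del e_irr.
- have e_del_sym : connect_sym e_del.
    by apply: sym_connect_sym => x y; rewrite /e_del e_sym.
  move=> x y; apply: connect_trans (e_del_connect_v e_conn x) _.
  by rewrite e_del_sym; exact: e_del_connect_v.
- move=> c c_uniq c_size; have := e_acyc (map val c).
  by rewrite (map_inj_uniq val_inj) size_map cycle_map => /(_ c_uniq c_size).
Qed.

Lemma card_del : #|{: V'}| = #|V|.-1.
Proof. by rewrite card_sig -(cardC1 w); apply: eq_card => x; rewrite !inE. Qed.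

Local Notation blocks := {p : V * {set V} | p.2 \in P p.1}.

Definition sub2_incl (p : sub2_vert P_del) : sub2_vert P :=
  match p with
  | inl (inl x) => inl (inl (val x))
  | inl (inr x) => inl (inr (val x))
  | inr b => inr (exist (fun p : V * {set V} => p.2 \in P p.1)
                   (val (val b).1, unrestr (val b).1 (val b).2) (unrestr_mem (valP b)))
  end.

Lemma sub2_incl_adj p q : sub2_adj e (sub2_incl p) (sub2_incl q) = sub2_adj e_del p q.
Proof.
case: p => [[x|x]|[[a1 a2] a_P]]; case: q => [[y|y]|[[b1 b2] b_P]] //=; rewrite ?val_eqE //.
by rewrite (mem_unrestr a_P) (mem_unrestr b_P).
Qed.

Lemma sub2_incl_stat p : sub2_stat (sub2_incl p) = sub2_stat p.
Proof. by case: p => [[x|x]|b]. Qed.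

Lemma sub2_incl_inj : injective sub2_incl.
Proof.
case=> [[x|x]|[[a1 a2] a_P]]; case=> [[y|y]|[[b1 b2] b_P]] //=.
- by move=> [] /val_inj ->.
- by move=> [] /val_inj ->.
- move=> [] /val_inj a1E; subst b1 => a2E.
  have a2b2 : a2 = b2 by move: (unrestrK a_P) (unrestrK b_P) => /= <- <-; rewrite a2E.
  by subst b2; congr inr; exact: val_inj.
Qed.

Lemma sub2_incl_adj_w p : sub2_adj e (sub2_incl p) (inl (inl w)) = false.
Proof.
case: p => [[x|x]|[[a1 a2] a_P]] //=; apply/negbTE; rewrite eq_sym;
  [exact: (valP x) | exact: (valP a1)].
Qed.

Lemma sub2_incl_adj_w1 p : sub2_adj e (sub2_incl p) (inl (inr w)) = false.
Proof. by case: p => [[x|x]|b] //=; exact/negbTE/(valP x). Qed.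

Lemma sub2_incl_neq_w p : sub2_incl p != inl (inl w).
Proof. by case: p => [[x|x]|b] //=; apply/eqP => [] [] xw; case/negP: (valP x); apply/eqP. Qed.

Lemma sub2_incl_neq_w1 p : sub2_incl p != inl (inr w).
Proof. by case: p => [[x|x]|b] //=; apply/eqP => [] [] xw; case/negP: (valP x); apply/eqP. Qed.

Lemma sub2_incl_neq_block p (b : blocks) :
  ((val b).1 == w) || (val b == (v, [set w])) -> sub2_incl p != inr b.
Proof.
case: p => [[x|x]|[[a1 a2] a_P]] //= bE; apply/eqP => [] [] /(congr1 val) /= abE.
move: bE; rewrite -abE /= (negbTE (valP a1)) /= xpair_eqE => /andP [_ /eqP].
by apply/eqP; exact: unrestr_neq.
Qed.

Lemma sub2_incl_adj_vw p (b : blocks) :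
  val b = (v, [set w]) -> sub2_adj e (sub2_incl p) (inr b) = (p == inl (inl vD)).
Proof.
case: b => [[b1 b2] b_P] /= [b1E b2E]; subst b1 b2.
by case: p => [[x|x]|[[a1 a2] a_P]] //=; rewrite in_set1 (negbTE (valP a1)) andbF.
Qed.

Lemma sub2_incl_adj_wv p (b : blocks) :
  val b = (w, [set v]) -> sub2_adj e (sub2_incl p) (inr b) =
  if p is inr b' then ((val b').1 == vD) && (w \in unrestr (val b').1 (val b').2)
  else false.
Proof.
case: b => [[b1 b2] b_P] /= [b1E b2E]; subst b1 b2.
case: p => [[x|x]|[[a1 a2] a_P]] //=; first exact/negbTE/(valP x).
rewrite in_set1 -val_eqE /= e_sym w_leaf.
by case: (val a1 =P v) => //= _; rewrite andbT.
Qed.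

Lemma sub2_incl_cover (q : sub2_vert P) :
  [\/ exists p, sub2_incl p = q, q = inl (inl w), q = inl (inr w) |
      exists2 b : blocks, q = inr b & (val b == (w, [set v])) || (val b == (v, [set w]))].
Proof.
case: q => [[x|x]|[[b1 b2] b_P]].
- have [->|x_w] := eqVneq x w; first by constructor 2.
  by constructor 1; exists (inl (inl (Sub x x_w))).
- have [->|x_w] := eqVneq x w; first by constructor 3.
  by constructor 1; exists (inl (inr (Sub x x_w))).
- have [b1w|b1_w] := eqVneq b1 w.
    constructor 4; exists (exist _ (b1, b2) b_P) => //=.
    by subst b1; move: (b_P); rewrite P_leaf in_set1 /= => /eqP ->; rewrite eqxx.
  have [b2w|b2_w] := eqVneq b2 [set w].
    constructor 4; exists (exist _ (b1, b2) b_P) => //=; apply/orP; right.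
    rewrite b2w xpair_eqE eqxx andbT -w_leaf e_sym.
    by apply: (block_adj b_P); rewrite b2w set11.
  constructor 1.
  have b2_del : restr b2 \in P_del (Sub b1 b1_w) by apply/P_delP; exists b2.
  exists (inr (exist (fun p : V' * {set V'} => p.2 \in P_del p.1)
                (Sub b1 b1_w, restr b2) b2_del)) => /=.
  by congr inr; apply: val_inj => /=; rewrite restrK.
Qed.

Lemma block_wv_mem : [set v] \in P w.
Proof. by rewrite P_leaf set11. Qed.

Definition block_wv : blocks :=
  exist (fun p : V * {set V} => p.2 \in P p.1) (w, [set v]) block_wv_mem.

Local Notation G' := (sub2_lgraph e_del P_del).
Local Notation G := (sub2_lgraph e P).

Section SingletonBlock.
Hypothesis w_single : [set w] \in P v.

Definition block_vw : blocks :=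
  exist (fun p : V * {set V} => p.2 \in P p.1) (v, [set w]) w_single.

Definition op2_vertex (j : 'I_4) : sub2_vert P :=
  match val j with
  | 0 => inl (inr w) | 1 => inl (inl w) | 2 => inr block_wv | _ => inr block_vw
  end.

Definition op2_iso : sub2_vert P_del + 'I_4 -> sub2_vert P := sum_case sub2_incl op2_vertex.

Lemma sub2_incl_adj_op2 p j :
  sub2_adj e (sub2_incl p) (op2_vertex j) = (p == inl (inl vD)) && (j == 3 :> nat).
Proof.
case: j => [[|[|[|[|//]]]] j4]; rewrite /op2_vertex /=.
- by rewrite sub2_incl_adj_w1 andbF.
- by rewrite sub2_incl_adj_w andbF.
- rewrite (sub2_incl_adj_wv _ (b := block_wv)) //.
  case: p => [[x|x]|[[a1 a2] a_P]] //=; rewrite ?andbF //.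
  apply/negbTE/negP => /andP [/eqP a1E wa]; subst a1.
  have := unrestr_neq a_P; rewrite /= -(def_pblock (P_triv v) w_single (set11 w)).
  by rewrite (def_pblock (P_triv v) (unrestr_mem a_P) wa) eqxx.
- by rewrite andbT (sub2_incl_adj_vw _ (b := block_vw)).
Qed.

Lemma op2_iso_bij : bijective op2_iso.
Proof.
apply: inj_surj_bij.
- have incl_new p j : sub2_incl p != op2_vertex j.
    case: j => [[|[|[|[|//]]]] j4]; rewrite /op2_vertex /=.
    + exact: sub2_incl_neq_w1.
    + exact: sub2_incl_neq_w.
    + by apply: sub2_incl_neq_block; rewrite /= eqxx.
    + by apply: sub2_incl_neq_block; rewrite /= eqxx orbT.
  have new_inj : injective op2_vertex.
    move=> [[|[|[|[|//]]]] j4] [[|[|[|[|//]]]] k4] /eqP;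
      rewrite /op2_vertex -!sum_eqE /= -?val_eqE /= ?xpair_eqE ?w_eq_vF ?v_eq_wF //= => _;
      exact: val_inj.
  exact: sum_case_inj sub2_incl_inj new_inj incl_new.
- move=> q; case: (sub2_incl_cover q) => [[p <-]|->|->|[b -> /orP [] /eqP bE]].
  + by exists (inl p).
  + by exists (inr (Ordinal (isT : 1 < 4))).
  + by exists (inr (Ordinal (isT : 0 < 4))).
  + by exists (inr (Ordinal (isT : 2 < 4))); congr inr; exact: val_inj.
  + by exists (inr (Ordinal (isT : 3 < 4))); congr inr; exact: val_inj.
Qed.

Lemma liso_op2_sub2 : liso (op2 (G := G') (inl (inl vD))) G.
Proof.
exists op2_iso; split; first exact: op2_iso_bij.
- move=> [p|j] [q|k] /=.
  + exact: sub2_incl_adj.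
  + exact: sub2_incl_adj_op2.
  + by rewrite sub2_adj_sym // sub2_incl_adj_op2.
  + case: j => [[|[|[|[|//]]]] j4]; case: k => [[|[|[|[|//]]]] k4] //=;
      by rewrite ?eqxx ?w_eq_vF ?v_eq_wF ?e_irr ?e_wv ?e_vw ?in_set1 ?eqxx.
- by move=> [p|[[|[|[|[|//]]]] j4]] //=; exact: sub2_incl_stat.
Qed.

End SingletonBlock.

Section LargerBlock.
Variable A : {set V}.
Hypotheses (A_P : A \in P v) (wA : w \in A) (A_w : A != [set w]).

Lemma restr_mem : restr A \in P_del vD.
Proof. by apply/P_delP; exists A. Qed.

Definition block_vA : {p : V' * {set V'} | p.2 \in P_del p.1} :=
  exist (fun p : V' * {set V'} => p.2 \in P_del p.1) (vD, restr A) restr_mem.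

Definition op1_vertex (j : 'I_3) : sub2_vert P :=
  match val j with 0 => inr block_wv | 1 => inl (inl w) | _ => inl (inr w) end.

Definition op1_iso : sub2_vert P_del + 'I_3 -> sub2_vert P := sum_case sub2_incl op1_vertex.

Lemma sub2_incl_adj_op1 p j :
  sub2_adj e (sub2_incl p) (op1_vertex j) = (p == inr block_vA) && (j == 0 :> nat).
Proof.
case: j => [[|[|[|//]]] j3]; rewrite /op1_vertex /=.
- rewrite andbT (sub2_incl_adj_wv _ (b := block_wv)) //.
  case: p => [[x|x]|[[a1 a2] a_P]] //=; apply/idP/idP.
    move=> /andP [/eqP a1E wa]; subst a1.
    have a2A : unrestr vD a2 = A.
      by rewrite -(def_pblock (P_triv v) A_P wA) (def_pblock (P_triv v) (unrestr_mem a_P) wa).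
    apply/eqP; congr inr; apply: val_inj => /=; congr pair.
    by rewrite -a2A (unrestrK a_P).
  by move=> /eqP [-> a2E]; rewrite eqxx /=; subst a2; rewrite restrK.
- by rewrite sub2_incl_adj_w andbF.
- by rewrite sub2_incl_adj_w1 andbF.
Qed.

Lemma op1_iso_bij : bijective op1_iso.
Proof.
apply: inj_surj_bij.
- have incl_new p j : sub2_incl p != op1_vertex j.
    case: j => [[|[|[|//]]] j3]; rewrite /op1_vertex /=.
    + by apply: sub2_incl_neq_block; rewrite /= eqxx.
    + exact: sub2_incl_neq_w.
    + exact: sub2_incl_neq_w1.
  have new_inj : injective op1_vertex.
    move=> [[|[|[|//]]] j3] [[|[|[|//]]] k3] /eqP;
      rewrite /op1_vertex -!sum_eqE //= => _; exact: val_inj.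
  exact: sum_case_inj sub2_incl_inj new_inj incl_new.
- move=> q; case: (sub2_incl_cover q) => [[p <-]|->|->|[b -> /orP [] /eqP bE]].
  + by exists (inl p).
  + by exists (inr (Ordinal (isT : 1 < 3))).
  + by exists (inr (Ordinal (isT : 2 < 3))).
  + by exists (inr (Ordinal (isT : 0 < 3))); congr inr; exact: val_inj.
  + case/eqP: A_w; have := valP b; rewrite bE /= => wv.
    by rewrite -(def_pblock (P_triv v) A_P wA) (def_pblock (P_triv v) wv (set11 w)).
Qed.

Lemma liso_op1_sub2 : liso (op1 (G := G') (inr block_vA)) G.
Proof.
exists op1_iso; split; first exact: op1_iso_bij.
- move=> [p|j] [q|k] /=.
  + exact: sub2_incl_adj.
  + exact: sub2_incl_adj_op1.
  + by rewrite sub2_adj_sym // sub2_incl_adj_op1.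
  + case: j => [[|[|[|//]]] j3]; case: k => [[|[|[|//]]] k3] //=;
      by rewrite ?eqxx ?w_eq_vF ?v_eq_wF ?e_irr ?e_wv ?e_vw ?in_set1 ?eqxx.
- by move=> [p|[[|[|[|//]]] j3]] //=; exact: sub2_incl_stat.
Qed.

End LargerBlock.

Lemma inO_iso_sub2_add_leaf : inO_iso G' -> inO_iso G.
Proof.
move=> G'_O; have [w_single|w_nsingle] := boolP ([set w] \in P v).
  apply: inO_iso_liso (liso_op2_sub2 w_single).
  by apply: (@inO_iso_op2 G' _ (inl (inr vD))) => //=.
have w_cov : w \in cover (P v) by case/and3P: (P_part v) => /eqP -> _ _; rewrite inE e_vw.
have A_P := pblock_mem w_cov.
have wA : w \in pblock (P v) w by rewrite mem_pblock.
have A_w : pblock (P v) w != [set w] by apply: contraNneq w_nsingle => <-.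
apply: inO_iso_liso (liso_op1_sub2 A_P wA A_w).
by apply: (@inO_iso_op1 G' (inl (inr vD)) (inl (inl vD))) => //=.
Qed.

End LeafDeletion.

Lemma inO_iso_sub2_order2 (V : finType) (e : rel V) (P : V -> {set {set V}}) :
  #|V| = 2 -> is_tree e -> (forall v, partition (P v) (nbhd e v)) ->
  inO_iso (sub2_lgraph e P).
Proof.
move=> V2 e_tree P_part; have [e_sym [e_irr _]] := e_tree.
have [u [v [u_v uv_all u_leaf]]] := tree_order2 V2 e_tree.
have v_leaf y : e v y = (y == u).
  rewrite e_sym; case/orP: (uv_all y) => /eqP ->; first by rewrite u_leaf !eqxx.
  by rewrite e_irr eq_sym (negbTE u_v).
have P_u := partition_leaf (P_part u) u_leaf.
have P_v := partition_leaf (P_part v) v_leaf.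
have uvF : (u == v) = false by exact/negbTE.
have vuF : (v == u) = false by rewrite eq_sym.
have b_uv : [set v] \in P u by rewrite P_u set11.
have b_vu : [set u] \in P v by rewrite P_v set11.
pose g (i : 'I_6) : sub2_vert P :=
  match val i with
  | 0 => inl (inr u) | 1 => inl (inl u)
  | 2 => inr (exist (fun p : V * {set V} => p.2 \in P p.1) (u, [set v]) b_uv)
  | 3 => inr (exist (fun p : V * {set V} => p.2 \in P p.1) (v, [set u]) b_vu)
  | 4 => inl (inl v) | _ => inl (inr v)
  end.
exists P6L; first exact: inO_P6.
exists g; split.
- apply: inj_surj_bij.
    move=> [[|[|[|[|[|[|//]]]]]] i6] [[|[|[|[|[|[|//]]]]]] j6] /eqP;
      rewrite /g -!sum_eqE /= -?sum_eqE /= -?val_eqE /= ?xpair_eqE ?uvF ?vuF //= => _;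
      exact: val_inj.
  case=> [[x|x]|[[x A] x_A]].
  + case/orP: (uv_all x) => /eqP ->.
      by exists (Ordinal (isT : 1 < 6)).
    by exists (Ordinal (isT : 4 < 6)).
  + case/orP: (uv_all x) => /eqP ->.
      by exists (Ordinal (isT : 0 < 6)).
    by exists (Ordinal (isT : 5 < 6)).
  + case/orP: (uv_all x) => /eqP x_E; subst x.
      have A_E : A = [set v] by apply/eqP; rewrite -in_set1 -P_u.
      subst A; exists (Ordinal (isT : 2 < 6)); congr inr; exact: val_inj.
    have A_E : A = [set u] by apply/eqP; rewrite -in_set1 -P_v.
    subst A; exists (Ordinal (isT : 3 < 6)); congr inr; exact: val_inj.
- move=> [[|[|[|[|[|[|//]]]]]] i6] [[|[|[|[|[|[|//]]]]]] j6]; rewrite /g /=;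
    by rewrite ?eqxx ?uvF ?vuF ?e_irr ?u_leaf ?v_leaf ?in_set1 ?eqxx.
- by move=> [[|[|[|[|[|[|//]]]]]] i6].
Qed.

Lemma inO_iso_sub2 (V : finType) (e : rel V) (P : V -> {set {set V}}) :
  is_tree e -> 2 <= #|V| -> (forall v, partition (P v) (nbhd e v)) ->
  inO_iso (sub2_lgraph e P).
Proof.
move=> e_tree /subnK; move: (#|V| - 2) => n V_n P_part.
elim: n V e P V_n e_tree P_part => [|n IH] V e P V_n e_tree P_part.
  exact: inO_iso_sub2_order2.
have [e_sym [e_irr _]] := e_tree.
have [w [v w_leaf]] := tree_leaf e_tree (ltac:(by rewrite -V_n addn2)).
apply: (inO_iso_sub2_add_leaf e_sym e_irr P_part w_leaf); apply: IH.
- by rewrite card_del -V_n addSn.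
- exact: e_del_tree.
- exact: P_del_partition.
Qed.

Lemma in_O'_in_O (H : finType) (eH : rel H) : in_O' eH -> in_O eH.
Proof.
move=> [V [e [P [e_tree V_ge2 P_part [g [g_bij g_adj]]]]]].
have [G G_O [f [f_bij f_adj _]]] := inO_iso_sub2 e_tree V_ge2 P_part.
exists G; split => //; exists (g \o f); split => [|x y /=]; first exact: bij_comp.
by rewrite g_adj; exact: f_adj.
Qed.

(** * The path P10 *)

Definition sum_swap (A B : Type) (p : A + B) : B + A :=
  match p with inl a => inr a | inr b => inl b end.

Lemma sum_swapK (A B : Type) : cancel (@sum_swap A B) (@sum_swap B A).
Proof. by case. Qed.

Lemma path10_in_O : in_O (@path_adj 10).
Proof.
exists (op2 (ord0 : lv P6L)); split.
  by apply: (@inO_op2 P6L ord0 (Ordinal (isT : 1 < 6)) inO_P6).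
(* P6 goes to 4..9 and the path abcd added at its end 0 goes to 0..3. *)
exists (unsplit \o @sum_swap 'I_6 'I_4); split.
  apply: bij_comp; first exact: (Bijective (@unsplitK 4 6) splitK).
  exact: (Bijective (@sum_swapK _ _) (@sum_swapK _ _)).
move=> [[[|[|[|[|[|[|//]]]]]] ?]|[[|[|[|[|//]]]] ?]];
  move=> [[[|[|[|[|[|[|//]]]]]] ?]|[[|[|[|[|//]]]] ?]]; by [].
Qed.

Lemma graph_iso_card_nbhd (T1 T2 : finType) (e1 : rel T1) (e2 : rel T2) (f : T1 -> T2) :
  bijective f -> (forall x y, e2 (f x) (f y) = e1 x y) ->
  forall x, #|nbhd e2 (f x)| = #|nbhd e1 x|.
Proof.
move=> [g fK gK] f_adj x; have f_inj := can_inj fK.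
rewrite -(card_imset _ f_inj); apply: eq_card => y.
by rewrite -[y]gK mem_imset // !inE f_adj.
Qed.

Lemma sub2_nbhd_leaf (V : finType) (e : rel V) (P : V -> {set {set V}}) v :
  nbhd (@sub2_adj V e P) (inl (inr v)) = [set inl (inl v)].
Proof. by apply/setP => [[[x|x]|b]]; rewrite !inE -?sum_eqE //= eq_sym. Qed.

Lemma path10_leaf (k : 'I_10) :
  #|nbhd (@path_adj 10) k| = 1 -> (k == 0 :> nat) || (k == 9 :> nat).
Proof.
move=> k_leaf; apply/negPn/negP => /norP [k_0 k_9].
have k_lt9 : k < 9 by rewrite ltn_neqAle k_9 -ltnS ltn_ord.
have k_pred : k.-1 < 10 := leq_ltn_trans (leq_pred k) (ltn_ord k).
suff : 1 < #|nbhd (@path_adj 10) k| by rewrite k_leaf.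
apply/card_gt1P; exists (Ordinal k_pred), (Ordinal (k_lt9 : k.+1 < 10)).
rewrite !inE /path_adj /= prednK ?lt0n // !eqxx orbT; split => //.
by apply/negP => /eqP [] pred_succ; have := leq_pred k; rewrite pred_succ ltnn.
Qed.

Lemma card_blocks_le (V : finType) (e : rel V) (P : V -> {set {set V}}) :
  irreflexive e -> (forall v, partition (P v) (nbhd e v)) -> #|V| <= 2 ->
  #|{: {p : V * {set V} | p.2 \in P p.1}}| <= #|V|.
Proof.
move=> e_irr P_part V_le2.
have P_le1 v : #|P v| <= 1.
  apply: leq_trans (card_partition_le (P_part v)) _.
  have : nbhd e v \subset [set~ v].
    by apply/subsetP => y; rewrite !inE; apply: contraTneq => ->; rewrite e_irr.
  move/subset_leq_card; rewrite cardsC1 => /leq_trans; apply.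
  by rewrite -subn1 leq_subLR.
apply: (@leq_card _ _ (fun b : {p : V * {set V} | p.2 \in P p.1} => (val b).1)).
move=> [[u A] uA] [[u' B] uB] /= u_u'; subst u'.
have A_B : A = B by apply: (card_le1_eqP (P_le1 u)).
by subst B; congr exist; exact: bool_irrelevance.
Qed.

Lemma path10_notin_O' : ~ in_O' (@path_adj 10).
Proof.
move=> [V [e [P [[_ [e_irr _]] _ P_part [f [f_bij f_adj]]]]]].
have f_inj := bij_inj f_bij.
have leaf_end v : (f (inl (inr v)) == 0 :> nat) || (f (inl (inr v)) == 9 :> nat).
  by apply: path10_leaf; rewrite (graph_iso_card_nbhd f_bij f_adj) sub2_nbhd_leaf cards1.
have V_le2 : #|V| <= 2.
  rewrite -card_bool; apply: (@leq_card _ _ (fun v => f (inl (inr v)) == 0 :> nat)).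
  move=> u v /= uv; have : f (inl (inr u)) = f (inl (inr v)).
    apply: ord_inj; move: (leaf_end u) (leaf_end v) uv.
    by case/orP => /eqP -> /orP [] /eqP ->.
  by move/f_inj => [].
have := bij_eq_card f_bij; rewrite card_ord !card_sum.
have := card_blocks_le e_irr P_part V_le2.
by move: V_le2; set n := #|V|; set b := #|_|; lia.
Qed.

Theorem mainTheorem4 :
  (forall (H : finType) (eH : rel H), in_O' eH -> in_O eH) /\
  in_O (@path_adj 10) /\ ~ in_O' (@path_adj 10).
Proof. by split; [exact: in_O'_in_O | split; [exact: path10_in_O | exact: path10_notin_O']]. Qed.
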